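(* Let $n\in\mathbb{N}$, $1<p<q$, $0<\omega<\omega_{p,q}$, and let $u$ be a positive solution of $$u''(r)+\frac{n-1}{r}u'(r)+f(u(r))=0\ (r>0),\qquad u'(0)=0,\qquad \lim_{r\to\infty}u(r)=0,$$ where $f(u)=-\omega u+u^p-u^q$. Let $B>0$ be the number such that $\Sigma<0$ on $(0,B)$ and $\Sigma>0$ on $(B,C)$ for some $C\in(B,\infty]$, where $\Sigma(u)=2nF(u)-(n-2)uf(u)$ and $F(u)=\int_0^u f(s)\,ds$. Then $$B<\|u\|_\infty=u(0).$$
   Context: $\omega_{p,q}=\frac{2(q-p)}{(p+1)(q-1)}\left[\frac{(p-1)(q+1)}{(p+1)(q-1)}\right]^{\frac{p-1}{q-p}}$; under $0<\omega<\omega_{p,q}$ a positive solution of the boundary value problem exists and is unique. The number $B$ is the smallest positive zero of $\Sigma$; it exists (with the stated sign pattern) under the hypotheses. *)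

From Stdlib Require Import Reals.
Open Scope R_scope.

(* x^a for real exponent a, used only for x > 0 (x^a := 0 for x <= 0). *)
Definition rpow (x a : R) : R := if Rlt_dec 0 x then Rpower x a else 0.

Definition omega_pq (p q : R) : R :=
  2 * (q - p) / ((p + 1) * (q - 1)) *
  Rpower (((p - 1) * (q + 1)) / ((p + 1) * (q - 1))) ((p - 1) / (q - p)).

Definition fnl (om p q u : R) : R := - om * u + rpow u p - rpow u q.

(* F(u) = int_0^u f(s) ds, written out explicitly (valid for u >= 0) *)
Definition Fnl (om p q u : R) : R :=
  - om * u ^ 2 / 2 + rpow u (p + 1) / (p + 1) - rpow u (q + 1) / (q + 1).

Definition Sigma (n : nat) (om p q u : R) : R :=
  2 * INR n * Fnl om p q u - (INR n - 2) * u * fnl om p q u.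

(* The energy E = u'^2/2 + F(u) is nonincreasing with E(0+) = F(u(0))
   and E(oo) = 0.  At an interior maximum rs with u(rs) > u(0) we would have
   f(u(rs)) >= 0 and 0 <= F(u(rs)) <= F(u(0)); since f(x)/x increases and then
   decreases, this is impossible, so u(0) = max u.  If u(0) <= B, then
   Sigma(u(r)) <= 0 for all r and Sigma(u(r)) < 0 for large r.  The Pohozaev
   function P(r) = r^(n-1) (r (u'^2 + 2 F(u)) + (n-2) u u') satisfies
   P' = r^(n-1) Sigma(u) and P(0+) = 0, so P is eventually below some c < 0;
   this contradicts u(oo) = 0 for n = 1, E >= 0 for n = 2, and the exponential
   decay of u for n >= 3. *)

From Stdlib Require Import Reals Lra Lia.
Open Scope R_scope.

Lemma Rabs_le_bounds (a b : R) : Rabs a <= b -> - b <= a <= b.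
Proof. unfold Rabs; destruct (Rcase_abs a); lra. Qed.

Lemma derivable_pt_lim_eq (f : R -> R) (x l l' : R) :
  derivable_pt_lim f x l -> l = l' -> derivable_pt_lim f x l'.
Proof. now intros H <-. Qed.

(* Pointwise forms of the Stdlib derivative rules, stated for lambda terms so
   that they apply without unfolding the function-algebra notations. *)
Lemma dpl_plus (f g : R -> R) (x a b : R) :
  derivable_pt_lim f x a -> derivable_pt_lim g x b ->
  derivable_pt_lim (fun y => f y + g y) x (a + b).
Proof. exact (derivable_pt_lim_plus f g x a b). Qed.

Lemma dpl_minus (f g : R -> R) (x a b : R) :
  derivable_pt_lim f x a -> derivable_pt_lim g x b ->
  derivable_pt_lim (fun y => f y - g y) x (a - b).
Proof. exact (derivable_pt_lim_minus f g x a b). Qed.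

Lemma dpl_mult (f g : R -> R) (x a b : R) :
  derivable_pt_lim f x a -> derivable_pt_lim g x b ->
  derivable_pt_lim (fun y => f y * g y) x (a * g x + f x * b).
Proof. exact (derivable_pt_lim_mult f g x a b). Qed.

Lemma dpl_scal (c : R) (f : R -> R) (x a : R) :
  derivable_pt_lim f x a -> derivable_pt_lim (fun y => c * f y) x (c * a).
Proof. exact (derivable_pt_lim_scal f c x a). Qed.

Lemma dpl_comp (f g : R -> R) (x a b : R) :
  derivable_pt_lim f x a -> derivable_pt_lim g (f x) b ->
  derivable_pt_lim (fun y => g (f y)) x (b * a).
Proof. exact (derivable_pt_lim_comp f g x a b). Qed.

Lemma dpl_square (f : R -> R) (x a : R) :
  derivable_pt_lim f x a -> derivable_pt_lim (fun y => f y ^ 2) x (2 * f x * a).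
Proof.
  intros Hf. eapply derivable_pt_lim_eq.
  - exact (dpl_comp f (fun y => y ^ 2) x a _ Hf (derivable_pt_lim_pow (f x) 2)).
  - simpl; ring.
Qed.

Lemma antitone_of_deriv (g g' : R -> R) (a : R) :
  (forall x, a < x -> derivable_pt_lim g x (g' x)) ->
  (forall x, a < x -> g' x <= 0) ->
  forall s r, a < s -> s <= r -> g r <= g s.
Proof.
  intros Hd Hneg s r Has Hsr.
  destruct (Rle_lt_or_eq_dec s r Hsr) as [Hlt | ->]; [| lra].
  destruct (MVT_cor2 g g' s r Hlt) as [c [Hc Hcs]].
  { intros c Hc; apply Hd; lra. }
  assert (g' c <= 0) by (apply Hneg; lra). nra.
Qed.

Definition near0 (P : R -> Prop) : Prop :=
  exists delta, 0 < delta /\ forall s, 0 < s < delta -> P s.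

Definition near_infty (P : R -> Prop) : Prop :=
  exists M, forall t, M < t -> P t.

Lemma near0_lt (r : R) : 0 < r -> near0 (fun s => s < r).
Proof. intros Hr. exists r. split; [exact Hr | tauto]. Qed.

Lemma near0_and (P Q : R -> Prop) : near0 P -> near0 Q -> near0 (fun s => P s /\ Q s).
Proof.
  intros [d1 [Hd1 H1]] [d2 [Hd2 H2]]. exists (Rmin d1 d2).
  split; [now apply Rmin_glb_lt |].
  intros s Hs. generalize (Rmin_l d1 d2) (Rmin_r d1 d2); intros.
  split; [apply H1 | apply H2]; lra.
Qed.

Lemma near0_impl (P Q : R -> Prop) :
  near0 P -> (forall s, 0 < s -> P s -> Q s) -> near0 Q.
Proof. intros [d [Hd H]] HPQ. exists d. split; [exact Hd |]. intros s Hs; apply HPQ; [lra | auto]. Qed.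

Lemma near0_exists (P : R -> Prop) : near0 P -> exists s, 0 < s /\ P s.
Proof. intros [d [Hd H]]. exists (d / 2). split; [lra | apply H; lra]. Qed.

Lemma near_infty_gt (R0 : R) : near_infty (fun t => R0 < t).
Proof. exists R0. tauto. Qed.

Lemma near_infty_and (P Q : R -> Prop) :
  near_infty P -> near_infty Q -> near_infty (fun t => P t /\ Q t).
Proof.
  intros [M1 H1] [M2 H2]. exists (Rmax M1 M2). intros t Ht.
  generalize (Rmax_l M1 M2) (Rmax_r M1 M2); intros.
  split; [apply H1 | apply H2]; lra.
Qed.

Lemma near_infty_impl (P Q : R -> Prop) :
  near_infty P -> (forall t, P t -> Q t) -> near_infty Q.
Proof. intros [M H] HPQ. exists M. auto. Qed.

Lemma near_infty_exists (P : R -> Prop) : near_infty P -> exists t, P t.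
Proof. intros [M H]. exists (M + 1). apply H; lra. Qed.

Lemma antitone_le_limsup_at_0 (g : R -> R) (L : R) :
  (forall s r, 0 < s -> s <= r -> g r <= g s) ->
  (forall eps, 0 < eps -> near0 (fun s => g s <= L + eps)) ->
  forall r, 0 < r -> g r <= L.
Proof.
  intros Hmono Hlim r Hr. apply Rle_plus_epsilon. intros eps Heps.
  destruct (near0_exists _ (near0_and _ _ (Hlim eps Heps) (near0_lt r Hr))) as [s [Hs [Hgs Hsr]]].
  apply Rle_trans with (g s); [apply Hmono; lra | exact Hgs].
Qed.

Lemma antitone_ge_liminf_at_infty (g : R -> R) (a L : R) :
  (forall s r, a < s -> s <= r -> g r <= g s) ->
  (forall eps, 0 < eps -> near_infty (fun t => L - eps <= g t)) ->
  forall r, a < r -> L <= g r.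
Proof.
  intros Hmono Hlim r Hr. apply Rle_plus_epsilon. intros eps Heps.
  destruct (near_infty_exists _ (near_infty_and _ _ (Hlim eps Heps) (near_infty_gt r)))
    as [t [Hgt Hrt]].
  assert (g t <= g r) by (apply Hmono; lra). lra.
Qed.

Lemma interior_max_derivatives (g g' : R -> R) (g2 a b x : R) :
  a < x < b -> (forall y, a < y < b -> g y <= g x) ->
  (forall y, a < y < b -> derivable_pt_lim g y (g' y)) ->
  derivable_pt_lim g' x g2 ->
  g' x = 0 /\ g2 <= 0.
Proof.
  intros Hx Hmax Hd Hd2.
  assert (Hcrit : g' x = 0).
  { exact (deriv_maximum g a b x (exist _ (g' x) (Hd x Hx)) (proj1 Hx) (proj2 Hx)
             (fun y Hay Hyb => Hmax y (conj Hay Hyb))). }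
  split; [exact Hcrit |].
  destruct (Rle_lt_dec g2 0) as [Hle | Hpos]; [exact Hle | exfalso].
  destruct (Hd2 (g2 / 2) ltac:(lra)) as [dl Hdl].
  pose proof (cond_pos dl) as Hdl0.
  set (h := Rmin dl (b - x) / 2).
  assert (0 < Rmin dl (b - x)) by (apply Rmin_glb_lt; lra).
  assert (Hh : 0 < h < dl /\ x + h < b)
    by (unfold h; generalize (Rmin_l dl (b - x)) (Rmin_r dl (b - x)); lra).
  (* g' is positive on (x, x + h], so g increases past its maximum *)
  assert (Hinc : forall k, 0 < k <= h -> 0 < g' (x + k)).
  { intros k Hk.
    assert (Hq := Hdl k ltac:(lra) ltac:(rewrite Rabs_pos_eq; lra)).
    apply Rabs_def2 in Hq. rewrite Hcrit, Rminus_0_r in Hq.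
    assert (0 < g' (x + k) / k) by lra.
    replace (g' (x + k)) with (g' (x + k) / k * k) by (field; lra).
    apply Rmult_lt_0_compat; lra. }
  destruct (MVT_cor2 g g' x (x + h) ltac:(lra)) as [c [Hc Hcx]].
  { intros c Hc; apply Hd; lra. }
  assert (0 < g' c) by (replace c with (x + (c - x)) by ring; apply Hinc; lra).
  assert (g (x + h) <= g x) by (apply Hmax; lra).
  nra.
Qed.

Lemma continuity_pt_near (f : R -> R) (x : R) : continuity_pt f x ->
  forall eps, 0 < eps -> exists alpha, 0 < alpha /\
    forall y, Rabs (y - x) < alpha -> Rabs (f y - f x) < eps.
Proof.
  intros Hc eps Heps. destruct (Hc eps Heps) as [alpha [Halpha H]].
  exists alpha. split; [exact Halpha |]. intros y Hy.
  destruct (Req_dec y x) as [-> | Hne].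
  - rewrite Rminus_diag, Rabs_R0. exact Heps.
  - apply (H y). split; [split; [exact I | auto] | exact Hy].
Qed.

Lemma nonpos_of_neg_on_left (g : R -> R) (B : R) : 0 < B -> continuity_pt g B ->
  (forall s, 0 < s < B -> g s < 0) -> g B <= 0.
Proof.
  intros HB Hc Hneg. apply Rle_plus_epsilon. intros eps Heps.
  destruct (continuity_pt_near g B Hc eps Heps) as [alpha [Halpha Hnear]].
  set (y := B - Rmin alpha B / 2).
  assert (0 < Rmin alpha B) by (apply Rmin_glb_lt; lra).
  assert (Hy : 0 < y < B /\ Rabs (y - B) < alpha).
  { unfold y. generalize (Rmin_l alpha B) (Rmin_r alpha B); intros.
    split; [lra |]. rewrite Rabs_left; lra. }
  assert (Hgy := Hneg y (proj1 Hy)).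
  pose proof (Rabs_def2 _ _ (Hnear y (proj2 Hy))). lra.
Qed.

Lemma exp_weighted_antitone (g g' : R -> R) (k a : R) :
  (forall x, a < x -> derivable_pt_lim g x (g' x)) ->
  (forall x, a < x -> g' x <= - k * g x) ->
  forall s r, a < s -> s <= r -> g r * exp (k * r) <= g s * exp (k * s).
Proof.
  intros Hd Hslope.
  apply (antitone_of_deriv (fun r => g r * exp (k * r))
           (fun x => exp (k * x) * (g' x + k * g x))).
  - intros x Hx. eapply derivable_pt_lim_eq.
    + apply dpl_mult; [now apply Hd |].
      apply (dpl_comp (fun r => k * r) exp); [| apply derivable_pt_lim_exp].
      apply dpl_scal, derivable_pt_lim_id.
    + cbv beta. ring.
  - intros x Hx. assert (0 < exp (k * x)) by apply exp_pos.
    assert (g' x + k * g x <= 0) by (generalize (Hslope x Hx); lra). nra.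
Qed.

Lemma exp_mult_nat (k : nat) (x : R) : exp (INR k * x) = exp x ^ k.
Proof.
  rewrite <- Rpower_pow by apply exp_pos. unfold Rpower. now rewrite ln_exp.
Qed.

Lemma exp_dominates_pow (a K R0 : R) (j : nat) :
  0 < a -> exists r, R0 < r /\ 0 < r /\ K * r ^ j < exp (a * r).
Proof.
  intros Ha.
  set (N := INR (S j)).
  assert (HN : 0 < N) by (apply lt_0_INR; lia).
  set (b := (a / N) ^ S j).
  assert (Hb : 0 < b) by (apply pow_lt, Rdiv_lt_0_compat; lra).
  assert (HK : 0 <= Rabs K / b)
    by (apply Rmult_le_pos; [apply Rabs_pos | left; apply Rinv_0_lt_compat; lra]).
  set (r := Rmax R0 0 + 1 + Rabs K / b).
  assert (Hr : R0 < r /\ 0 < r) by (unfold r; generalize (Rmax_l R0 0) (Rmax_r R0 0); lra).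
  exists r; split; [tauto | split; [tauto |]].
  (* exp (a r) = exp (a r / N) ^ N >= (a r / N) ^ N = b r r^j > K r^j *)
  assert (Hexp : exp (a * r) = exp (a * r / N) ^ S j)
    by (rewrite <- exp_mult_nat; fold N; f_equal; field; lra).
  assert (Hbase : (a * r / N) ^ S j <= exp (a * r / N) ^ S j).
  { apply pow_incr. split.
    - apply Rmult_le_pos; [apply Rmult_le_pos; lra | left; apply Rinv_0_lt_compat; lra].
    - generalize (exp_ineq1_le (a * r / N)); lra. }
  assert (Hpow : (a * r / N) ^ S j = b * r * r ^ j)
    by (unfold b; replace (a * r / N) with (a / N * r) by (field; lra);
        rewrite Rpow_mult_distr; simpl; ring).
  assert (Hbr : K < b * r).
  { apply Rle_lt_trans with (Rabs K); [apply Rle_abs |].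
    unfold r. replace (b * (Rmax R0 0 + 1 + Rabs K / b)) with (b * (Rmax R0 0 + 1) + Rabs K)
      by (field; lra).
    generalize (Rmax_r R0 0); nra. }
  assert (0 < r ^ j) by (apply pow_lt; lra).
  assert (K * r ^ j < b * r * r ^ j) by (apply Rmult_lt_compat_r; lra).
  lra.
Qed.

Lemma rpow_pos_eq (x a : R) : 0 < x -> rpow x a = Rpower x a.
Proof. intros Hx; unfold rpow; destruct (Rlt_dec 0 x); [reflexivity | lra]. Qed.

Lemma derivable_pt_lim_rpow (x a : R) :
  0 < x -> derivable_pt_lim (fun y => rpow y a) x (a * Rpower x (a - 1)).
Proof.
  intros Hx.
  apply (derivable_pt_lim_locally_ext (fun y => Rpower y a) _ x (x / 2) (2 * x)); [lra | |].
  - intros y Hy; rewrite rpow_pos_eq; [reflexivity | lra].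
  - now apply derivable_pt_lim_power.
Qed.

Lemma Rpower_small (a eps : R) : 0 < a -> 0 < eps -> near0 (fun x => Rpower x a <= eps).
Proof.
  intros Ha Heps. exists (Rpower eps (/ a)). split; [apply exp_pos |].
  intros x Hx. replace eps with (Rpower (Rpower eps (/ a)) a).
  - apply Rle_Rpower_l; lra.
  - rewrite Rpower_mult, Rinv_l, Rpower_1 by lra. reflexivity.
Qed.

Section Nonlinearity.
Variables om p q : R.
Hypothesis Hp : 1 < p.
Hypothesis Hpq : p < q.

Lemma Fnl_deriv (x : R) : 0 < x -> derivable_pt_lim (Fnl om p q) x (fnl om p q x).
Proof.
  intros Hx. unfold Fnl, fnl. eapply derivable_pt_lim_eq.
  - apply dpl_minus; [apply dpl_plus |].
    + apply (derivable_pt_lim_div_scal (fun y => - om * y ^ 2)).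
      apply dpl_scal, derivable_pt_lim_pow.
    + apply (derivable_pt_lim_div_scal (fun y => rpow y (p + 1))), derivable_pt_lim_rpow, Hx.
    + apply (derivable_pt_lim_div_scal (fun y => rpow y (q + 1))), derivable_pt_lim_rpow, Hx.
  - rewrite !rpow_pos_eq by exact Hx.
    replace (p + 1 - 1) with p by ring. replace (q + 1 - 1) with q by ring.
    simpl. field. lra.
Qed.

Lemma Fnl_continuous (x : R) : 0 < x -> continuity_pt (Fnl om p q) x.
Proof. intros Hx. apply derivable_continuous_pt. exists (fnl om p q x). now apply Fnl_deriv. Qed.

Lemma fnl_continuous (x : R) : 0 < x -> continuity_pt (fnl om p q) x.
Proof.
  intros Hx.
  assert (Hrpow : forall a, continuity_pt (fun y => rpow y a) x).
  { intros a. apply derivable_continuous_pt. eexists. now apply derivable_pt_lim_rpow. }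
  unfold fnl. apply continuity_pt_minus; [apply continuity_pt_plus |]; [| apply Hrpow ..].
  apply continuity_pt_scal, derivable_continuous_pt, derivable_pt_id.
Qed.

Lemma Sigma_continuous (n : nat) (x : R) : 0 < x -> continuity_pt (Sigma n om p q) x.
Proof.
  intros Hx. unfold Sigma. apply continuity_pt_minus.
  - apply continuity_pt_scal, Fnl_continuous, Hx.
  - apply continuity_pt_mult; [| apply fnl_continuous, Hx].
    apply continuity_pt_scal, derivable_continuous_pt, derivable_pt_id.
Qed.

(* The quotient f(x)/x = -om + x^(p-1) - x^(q-1); it first increases, then
   decreases, which forces the sign pattern of f used below. *)
Definition fquot (x : R) : R := - om + Rpower x (p - 1) - Rpower x (q - 1).

Lemma fnl_fquot (x : R) : 0 < x -> fnl om p q x = x * fquot x.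
Proof.
  intros Hx. unfold fnl, fquot. rewrite !rpow_pos_eq by exact Hx.
  replace p with ((p - 1) + 1) at 1 by ring. replace q with ((q - 1) + 1) at 1 by ring.
  rewrite !Rpower_plus, Rpower_1 by exact Hx. ring.
Qed.

Lemma fquot_deriv (x : R) :
  0 < x -> derivable_pt_lim fquot x (Rpower x (p - 2) * ((p - 1) - (q - 1) * Rpower x (q - p))).
Proof.
  intros Hx. unfold fquot. eapply derivable_pt_lim_eq.
  - apply dpl_minus; [apply dpl_plus |];
      [apply derivable_pt_lim_const | apply derivable_pt_lim_power, Hx ..].
  - replace (q - 1 - 1) with ((p - 2) + (q - p)) by ring.
    replace (p - 1 - 1) with (p - 2) by ring.
    rewrite Rpower_plus. ring.
Qed.

Lemma fquot_quasiconcave (v w M : R) :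
  0 < v -> v < w -> w < M -> Rmin (fquot v) (fquot M) < fquot w.
Proof.
  intros Hv Hvw HwM.
  destruct (Rlt_le_dec (Rmin (fquot v) (fquot M)) (fquot w)) as [H | H]; [exact H | exfalso].
  set (d := fun x => Rpower x (p - 2) * ((p - 1) - (q - 1) * Rpower x (q - p))).
  assert (Hd : forall a b, 0 < a -> a < b -> exists c, fquot b - fquot a = d c * (b - a) /\ a < c < b).
  { intros a b Ha Hab. apply MVT_cor2; [exact Hab |]. intros c Hc; apply fquot_deriv; lra. }
  destruct (Hd v w Hv Hvw) as [x1 [E1 I1]].
  destruct (Hd w M ltac:(lra) HwM) as [x2 [E2 I2]].
  (* fquot does not increase on [v, w] and does not decrease on [w, M] *)
  assert (S1 : d x1 <= 0) by (generalize (Rmin_l (fquot v) (fquot M)); nra).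
  assert (S2 : 0 <= d x2) by (generalize (Rmin_r (fquot v) (fquot M)); nra).
  unfold d in S1, S2.
  assert (P1 := exp_pos ((p - 2) * ln x1)). assert (P2 := exp_pos ((p - 2) * ln x2)).
  fold (Rpower x1 (p - 2)) in P1. fold (Rpower x2 (p - 2)) in P2.
  assert (L : Rpower x1 (q - p) < Rpower x2 (q - p)) by (apply Rlt_Rpower_l; lra).
  assert ((p - 1) - (q - 1) * Rpower x1 (q - p) <= 0) by nra.
  assert (0 <= (p - 1) - (q - 1) * Rpower x2 (q - p)) by nra.
  nra.
Qed.

Lemma Fnl_sandwich (x : R) : 0 < x ->
  - om * x ^ 2 / 2 - x ^ 2 * Rpower x (q - 1) <= Fnl om p q x <=
  - om * x ^ 2 / 2 + x ^ 2 * Rpower x (p - 1).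
Proof.
  intros Hx.
  assert (Hsq : forall a, rpow x (a + 1) = x ^ 2 * Rpower x (a - 1)).
  { intros a. rewrite rpow_pos_eq by exact Hx.
    replace (a + 1) with ((a - 1) + 1 + 1) by ring.
    rewrite !Rpower_plus, Rpower_1 by exact Hx. ring. }
  unfold Fnl. rewrite !Hsq.
  assert (0 < x ^ 2) by (apply pow_lt; exact Hx).
  assert (0 < x ^ 2 * Rpower x (p - 1)) by (apply Rmult_lt_0_compat; [lra | apply exp_pos]).
  assert (0 < x ^ 2 * Rpower x (q - 1)) by (apply Rmult_lt_0_compat; [lra | apply exp_pos]).
  assert (Hdiv : forall y a, 0 < y -> 1 < a -> 0 < y / a <= y).
  { intros y a Hy Ha. split; [apply Rdiv_lt_0_compat; lra |].
    apply Rmult_le_reg_r with a; [lra |]. unfold Rdiv. rewrite Rmult_assoc, Rinv_l by lra. nra. }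
  pose proof (Hdiv (x ^ 2 * Rpower x (p - 1)) (p + 1) ltac:(lra) ltac:(lra)).
  pose proof (Hdiv (x ^ 2 * Rpower x (q - 1)) (q + 1) ltac:(lra) ltac:(lra)).
  lra.
Qed.

Hypothesis Hom : 0 < om.

Lemma Fnl_small (eps : R) : 0 < eps -> near0 (fun x => Rabs (Fnl om p q x) <= eps).
Proof.
  intros Heps. set (c := om / 2 + 1).
  assert (Hc : 0 < eps / c) by (apply Rdiv_lt_0_compat; unfold c; lra).
  apply (near0_impl (fun x => (Rpower x (p - 1) <= 1 /\ Rpower x (q - 1) <= 1) /\
                              (x < 1 /\ x < eps / c))).
  { apply near0_and; apply near0_and;
      [apply Rpower_small | apply Rpower_small | apply near0_lt | apply near0_lt]; lra. }
  intros x Hx [[Hxp Hxq] [Hx1 Hxc]].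
  destruct (Fnl_sandwich x Hx).
  assert (Hcx : c * x < eps).
  { apply Rmult_lt_reg_r with (/ c); [apply Rinv_0_lt_compat; unfold c; lra |].
    rewrite Rmult_comm, <- Rmult_assoc, Rinv_l by (unfold c; lra). lra. }
  assert (0 < x ^ 2 <= x) by (simpl; nra).
  apply Rabs_le. unfold c in Hcx. nra.
Qed.

Lemma Fnl_quadratic_upper : near0 (fun x => Fnl om p q x <= - om / 4 * x ^ 2).
Proof.
  apply (near0_impl _ _ (Rpower_small (p - 1) (om / 4) ltac:(lra) ltac:(lra))).
  intros x Hx Hsmall. destruct (Fnl_sandwich x Hx).
  assert (0 < x ^ 2) by (apply pow_lt; lra).
  nra.
Qed.

Lemma fnl_bounded (K x : R) : 0 < x <= K ->
  Rabs (fnl om p q x) <= om * K + Rpower K p + Rpower K q.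
Proof.
  intros Hx. unfold fnl. rewrite !rpow_pos_eq by lra.
  assert (Rpower x p <= Rpower K p) by (apply Rle_Rpower_l; lra).
  assert (Rpower x q <= Rpower K q) by (apply Rle_Rpower_l; lra).
  assert (0 < Rpower x p) by apply exp_pos. assert (0 < Rpower x q) by apply exp_pos.
  apply Rabs_le. nra.
Qed.

Lemma Fnl_increment (x y : R) : 0 < x < y ->
  exists w, x < w < y /\ Fnl om p q y - Fnl om p q x = w * fquot w * (y - x).
Proof.
  intros Hxy. destruct (MVT_cor2 (Fnl om p q) (fnl om p q) x y ltac:(lra)) as [w [Hw Iw]].
  { intros c Hc. apply Fnl_deriv. lra. }
  exists w. split; [exact Iw |]. rewrite Hw, fnl_fquot by lra. reflexivity.
Qed.

Lemma Fnl_neg_of_fquot_neg (a : R) : 0 < a ->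
  (forall w, 0 < w <= a -> fquot w < 0) -> Fnl om p q a < 0.
Proof.
  intros Ha Hneg.
  assert (Hdec : forall x y, 0 < x < y -> y <= a -> Fnl om p q y < Fnl om p q x).
  { intros x y Hxy Hya. destruct (Fnl_increment x y Hxy) as [w [Iw Hw]].
    assert (fquot w < 0) by (apply Hneg; lra).
    assert (0 < w * - fquot w * (y - x)) by (apply Rmult_lt_0_compat; [apply Rmult_lt_0_compat |]; lra).
    lra. }
  assert (Hhalf : Fnl om p q (a / 2) <= 0).
  { apply Rle_plus_epsilon. intros eps Heps.
    destruct (near0_exists _ (near0_and _ _ (Fnl_small eps Heps) (near0_lt (a / 2) ltac:(lra))))
      as [x [Hx [Hsmall Hxa]]].
    assert (Fnl om p q (a / 2) < Fnl om p q x) by (apply Hdec; lra).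
    apply Rabs_le_bounds in Hsmall. lra. }
  assert (Fnl om p q a < Fnl om p q (a / 2)) by (apply Hdec; lra).
  lra.
Qed.

Lemma no_critical_level_above (a M : R) : 0 < a < M ->
  0 <= fnl om p q M -> 0 <= Fnl om p q M -> Fnl om p q M <= Fnl om p q a -> False.
Proof.
  intros HaM HfM HFM HFMa.
  rewrite fnl_fquot in HfM by lra.
  assert (HqM : 0 <= fquot M) by (destruct (Rle_lt_dec 0 (fquot M)); [assumption | nra]).
  destruct (Rle_lt_dec 0 (fquot a)) as [Hqa | Hqa].
  - (* f > 0 on (a, M), so F(a) < F(M) *)
    destruct (Fnl_increment a M ltac:(lra)) as [w [Iw Hw]].
    assert (Hqw := fquot_quasiconcave a w M ltac:(lra) ltac:(lra) ltac:(lra)).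
    assert (0 < fquot w) by (unfold Rmin in Hqw; destruct (Rle_dec _ _) in Hqw; lra).
    assert (0 < w * fquot w * (M - a)) by (apply Rmult_lt_0_compat; [apply Rmult_lt_0_compat |]; lra).
    lra.
  - (* f < 0 on (0, a], so F(a) < 0 *)
    assert (Hneg : forall w, 0 < w <= a -> fquot w < 0).
    { intros w Hw. destruct (Req_dec w a) as [-> | Hwa]; [exact Hqa |].
      assert (Hq := fquot_quasiconcave w a M ltac:(lra) ltac:(lra) ltac:(lra)).
      unfold Rmin in Hq; destruct (Rle_dec _ _) in Hq; lra. }
    assert (Fnl om p q a < 0) by (apply Fnl_neg_of_fquot_neg; [lra | exact Hneg]).
    lra.
Qed.

End Nonlinearity.

Lemma pow_pred_mult (m : nat) (r : R) : INR m * r ^ pred m * r = INR m * r ^ m.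
Proof. destruct m; simpl; ring. Qed.

(* A positive radial solution in dimension n = m + 1: u'' + (m / r) u' + f(u) = 0
   on (0, oo), with u'(0) = 0 as a right difference quotient and u(oo) = 0. *)
Section RadialSolution.
Variables (m : nat) (om p q : R) (u du d2u : R -> R).
Hypothesis Hp : 1 < p.
Hypothesis Hpq : p < q.
Hypothesis Hom : 0 < om.
Hypothesis Hpos : forall r, 0 <= r -> 0 < u r.
Hypothesis Hdu : forall r, 0 < r -> derivable_pt_lim u r (du r).
Hypothesis Hd2u : forall r, 0 < r -> derivable_pt_lim du r (d2u r).
Hypothesis Hode : forall r, 0 < r -> d2u r = - (INR m / r) * du r - fnl om p q (u r).
Hypothesis Hu0 : forall eps, 0 < eps -> near0 (fun h => Rabs ((u h - u 0) / h) < eps).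
Hypothesis Hinf : forall eps, 0 < eps -> near_infty (fun r => Rabs (u r) < eps).

Lemma u_increment_at_0 (eps : R) : 0 < eps -> near0 (fun h => Rabs (u h - u 0) <= eps * h).
Proof.
  intros Heps. apply (near0_impl _ _ (Hu0 eps Heps)). intros h Hh Hq.
  replace (u h - u 0) with ((u h - u 0) / h * h) by (field; lra).
  rewrite Rabs_mult, (Rabs_pos_eq h) by lra.
  apply Rmult_le_compat_r; lra.
Qed.

Lemma u_right_continuous (eps : R) : 0 < eps -> near0 (fun h => Rabs (u h - u 0) <= eps).
Proof.
  intros Heps.
  apply (near0_impl _ _ (near0_and _ _ (u_increment_at_0 1 ltac:(lra)) (near0_lt eps Heps))).
  intros h Hh [Hinc Hlt]. lra.
Qed.

Lemma u_small_at_infty (eps : R) : 0 < eps -> near_infty (fun r => 0 < u r < eps).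
Proof.
  intros Heps. destruct (Hinf eps Heps) as [M HM]. exists (Rmax M 0). intros t Ht.
  generalize (Rmax_l M 0) (Rmax_r M 0); intros.
  assert (0 < u t) by (apply Hpos; lra).
  assert (Hu := HM t ltac:(lra)). rewrite Rabs_pos_eq in Hu by lra. lra.
Qed.

(* Since u'(0) = 0 holds only as a one-sided difference quotient, du has small
   values arbitrarily close to 0 (mean value theorem on [h/2, h]). *)
Lemma du_small_somewhere (eps r : R) : 0 < eps -> 0 < r ->
  exists xi, 0 < xi < r /\ Rabs (du xi) <= eps.
Proof.
  intros Heps Hr.
  destruct (u_increment_at_0 (eps / 3) ltac:(lra)) as [d [Hd Hinc]].
  set (h := Rmin d r / 2).
  assert (0 < Rmin d r) by (apply Rmin_glb_lt; lra).
  assert (Hh : 0 < h < d /\ h < r) by (unfold h; generalize (Rmin_l d r) (Rmin_r d r); lra).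
  destruct (MVT_cor2 u du (h / 2) h ltac:(lra)) as [xi [Hxi Ixi]].
  { intros c Hc. apply Hdu. lra. }
  exists xi. split; [lra |].
  pose proof (Rabs_le_bounds _ _ (Hinc h ltac:(lra))).
  pose proof (Rabs_le_bounds _ _ (Hinc (h / 2) ltac:(lra))).
  apply Rabs_le. split; nra.
Qed.

Lemma divergence_form (r : R) : 0 < r ->
  derivable_pt_lim (fun s => s ^ m * du s) r (- r ^ m * fnl om p q (u r)).
Proof.
  intros Hr. eapply derivable_pt_lim_eq.
  - apply dpl_mult; [apply derivable_pt_lim_pow | apply Hd2u, Hr].
  - rewrite Hode by exact Hr.
    replace (INR m * r ^ pred m) with (INR m * r ^ m / r)
      by (rewrite <- pow_pred_mult; field; lra).
    field. lra.
Qed.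

Lemma du_linear_at_0 : exists K, 0 <= K /\ near0 (fun r => Rabs (du r) <= K * r).
Proof.
  set (K := om * (u 0 + 1) + Rpower (u 0 + 1) p + Rpower (u 0 + 1) q).
  assert (Hu00 : 0 < u 0) by (apply Hpos; lra).
  exists K. split.
  { unfold K. generalize (exp_pos (p * ln (u 0 + 1))) (exp_pos (q * ln (u 0 + 1))).
    unfold Rpower. nra. }
  destruct (u_right_continuous 1 ltac:(lra)) as [d [Hd Hclose]].
  exists d. split; [exact Hd |]. intros r Hr.
  assert (Hf : forall z, 0 < z < d -> Rabs (fnl om p q (u z)) <= K).
  { intros z Hz. apply fnl_bounded; try assumption.
    split; [apply Hpos; lra |]. pose proof (Rabs_le_bounds _ _ (Hclose z Hz)). lra. }
  assert (Hrm : 0 < r ^ m) by (apply pow_lt; lra).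
  apply Rle_plus_epsilon. intros eps Heps.
  destruct (du_small_somewhere eps r Heps ltac:(lra)) as [xi [Ixi Hxi]].
  destruct (MVT_cor2 (fun s => s ^ m * du s) (fun s => - s ^ m * fnl om p q (u s)) xi r ltac:(lra))
    as [z [Hz Iz]].
  { intros c Hc. apply divergence_form. lra. }
  (* r^m |u'(r)| <= xi^m |u'(xi)| + z^m |f(u(z))| (r - xi) <= r^m (eps + K r) *)
  assert (Hxim : 0 <= xi ^ m <= r ^ m) by (split; [apply pow_le | apply pow_incr]; lra).
  assert (Hzm : 0 <= z ^ m <= r ^ m) by (split; [apply pow_le | apply pow_incr]; lra).
  assert (H1 : Rabs (xi ^ m * du xi) <= r ^ m * eps).
  { rewrite Rabs_mult, (Rabs_pos_eq (xi ^ m)) by lra.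
    apply Rmult_le_compat; [lra | apply Rabs_pos | lra | exact Hxi]. }
  assert (H2 : Rabs (- z ^ m * fnl om p q (u z) * (r - xi)) <= r ^ m * (K * r)).
  { rewrite !Rabs_mult, Rabs_Ropp, (Rabs_pos_eq (z ^ m)), (Rabs_pos_eq (r - xi)) by lra.
    rewrite <- Rmult_assoc.
    apply Rmult_le_compat; [| lra | apply Rmult_le_compat | lra];
      try apply Rabs_pos; try lra; [apply Rmult_le_pos; [lra | apply Rabs_pos] | apply Hf; lra]. }
  assert (Habs : Rabs (r ^ m * du r) <= r ^ m * (K * r + eps)).
  { replace (r ^ m * du r) with (xi ^ m * du xi + - z ^ m * fnl om p q (u z) * (r - xi)) by lra.
    apply Rle_trans with (1 := Rabs_triang _ _). lra. }
  rewrite Rabs_mult, (Rabs_pos_eq (r ^ m)) in Habs by lra.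
  apply Rmult_le_reg_l with (r ^ m); lra.
Qed.

Lemma du_vanishes_at_0 (eps : R) : 0 < eps -> near0 (fun r => Rabs (du r) <= eps).
Proof.
  intros Heps. destruct du_linear_at_0 as [K [HK Hlin]].
  assert (HepsK : 0 < eps / (K + 1)) by (apply Rdiv_lt_0_compat; lra).
  apply (near0_impl _ _ (near0_and _ _ Hlin (near0_lt _ HepsK))).
  intros r Hr [Hdu_r Hsmall].
  assert (K * r <= eps).
  { apply Rle_trans with ((K + 1) * r); [nra |].
    apply Rmult_lt_compat_l with (r := K + 1) in Hsmall; [| lra].
    replace ((K + 1) * (eps / (K + 1))) with eps in Hsmall by (field; lra). lra. }
  lra.
Qed.

Definition energy (r : R) : R := du r ^ 2 / 2 + Fnl om p q (u r).

Lemma energy_deriv (r : R) : 0 < r -> derivable_pt_lim energy r (- (INR m / r) * du r ^ 2).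
Proof.
  intros Hr. unfold energy. eapply derivable_pt_lim_eq.
  - apply dpl_plus.
    + apply (derivable_pt_lim_div_scal (fun s => du s ^ 2)), dpl_square, Hd2u, Hr.
    + apply (dpl_comp u (Fnl om p q)); [apply Hdu, Hr | apply Fnl_deriv, Hpos; lra].
  - rewrite Hode by exact Hr. field. lra.
Qed.

Lemma energy_antitone (s r : R) : 0 < s -> s <= r -> energy r <= energy s.
Proof.
  apply (antitone_of_deriv energy (fun x => - (INR m / x) * du x ^ 2) 0).
  - exact energy_deriv.
  - intros x Hx.
    assert (0 <= INR m / x)
      by (apply Rmult_le_pos; [apply pos_INR | left; apply Rinv_0_lt_compat, Hx]).
    assert (0 <= du x ^ 2) by apply pow2_ge_0. nra.
Qed.

(* E(0+) = F(u(0)), hence E <= F(u(0)). *)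
Lemma energy_le_initial (r : R) : 0 < r -> energy r <= Fnl om p q (u 0).
Proof.
  apply antitone_le_limsup_at_0; [exact energy_antitone |].
  intros eps Heps.
  assert (Hu00 : 0 < u 0) by (apply Hpos; lra).
  destruct (continuity_pt_near _ _ (Fnl_continuous om p q Hp Hpq (u 0) Hu00) (eps / 2) ltac:(lra))
    as [alpha [Halpha HF]].
  apply (near0_impl _ _ (near0_and _ _ (u_right_continuous (alpha / 2) ltac:(lra))
                                       (du_vanishes_at_0 (Rmin 1 eps) ltac:(apply Rmin_glb_lt; lra)))).
  intros s Hs [Hus Hdus]. unfold energy.
  pose proof (Rabs_def2 _ _ (HF (u s) ltac:(lra))).
  assert (du s ^ 2 <= eps).
  { generalize (Rmin_l 1 eps) (Rmin_r 1 eps). intros.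
    pose proof (Rabs_le_bounds _ _ Hdus). simpl. nra. }
  lra.
Qed.

(* E(oo) = 0, hence E >= 0. *)
Lemma energy_nonneg (r : R) : 0 < r -> 0 <= energy r.
Proof.
  apply (antitone_ge_liminf_at_infty energy 0 0); [exact energy_antitone |].
  intros eps Heps.
  destruct (Fnl_small om p q Hp Hpq Hom eps Heps) as [d [Hd Hsmall]].
  apply (near_infty_impl _ _ (u_small_at_infty d Hd)).
  intros t Hut. unfold energy.
  pose proof (Rabs_le_bounds _ _ (Hsmall (u t) Hut)).
  assert (0 <= du t ^ 2) by apply pow2_ge_0. lra.
Qed.

(* If u somewhere exceeds u(0), it attains a global maximum on (0, oo) above
   u(0), since u(r) is close to u(0) near 0 and close to 0 near infinity. *)
Lemma max_above_initial (r1 : R) : 0 <= r1 -> u 0 < u r1 ->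
  exists rs, 0 < rs /\ u r1 <= u rs /\ forall x, 0 < x -> u x <= u rs.
Proof.
  intros Hr1 Hgt.
  assert (Hr1' : 0 < r1) by (destruct Hr1 as [H | <-]; [exact H | lra]).
  destruct (u_right_continuous ((u r1 - u 0) / 2) ltac:(lra)) as [d [Hd Hnear0]].
  destruct (u_small_at_infty (u r1) ltac:(apply Hpos; lra)) as [M Hfar].
  set (a := Rmin d r1 / 2). set (b := Rmax M r1 + 1).
  assert (0 < Rmin d r1) by (apply Rmin_glb_lt; lra).
  assert (Ha : 0 < a < d /\ a < r1) by (unfold a; generalize (Rmin_l d r1) (Rmin_r d r1); lra).
  assert (Hb : M < b /\ r1 < b) by (unfold b; generalize (Rmax_l M r1) (Rmax_r M r1); lra).
  destruct (continuity_ab_maj u a b ltac:(lra)) as [rs [Hmax Hrs]].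
  { intros c Hc. apply derivable_continuous_pt. exists (du c). apply Hdu. lra. }
  assert (Hge : u r1 <= u rs) by (apply Hmax; lra).
  exists rs. split; [lra | split; [exact Hge |]].
  intros x Hx.
  destruct (Rlt_le_dec x a) as [Hxa | Hxa]; [| destruct (Rle_lt_dec x b) as [Hxb | Hxb]].
  - pose proof (Rabs_le_bounds _ _ (Hnear0 x ltac:(lra))). lra.
  - apply Hmax; lra.
  - assert (Hux := Hfar x ltac:(lra)). lra.
Qed.

(* Maximum principle: u attains its supremum at r = 0.  At an interior maximum
   rs one would have f(u(rs)) >= 0 and 0 <= F(u(rs)) = E(rs) <= F(u(0)),
   which the shape of f rules out. *)
Lemma u_le_initial (r : R) : 0 <= r -> u r <= u 0.
Proof.
  intros Hr. destruct (Rle_lt_dec (u r) (u 0)) as [H | Hgt]; [exact H | exfalso].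
  destruct (max_above_initial r Hr Hgt) as [rs [Hrs [Hge Hmax]]].
  destruct (interior_max_derivatives u du (d2u rs) 0 (rs + 1) rs) as [Hcrit Hconc].
  - lra.
  - intros y Hy. apply Hmax. lra.
  - intros y Hy. apply Hdu. lra.
  - apply Hd2u, Hrs.
  - assert (Hf : 0 <= fnl om p q (u rs)) by (rewrite Hode, Hcrit in Hconc by exact Hrs; lra).
    assert (HE : energy rs = Fnl om p q (u rs)) by (unfold energy; rewrite Hcrit; simpl; field).
    apply (no_critical_level_above om p q Hp Hpq Hom (u 0) (u rs)).
    + split; [apply Hpos; lra | lra].
    + exact Hf.
    + rewrite <- HE. apply energy_nonneg, Hrs.
    + rewrite <- HE. apply energy_le_initial, Hrs.
Qed.

Definition pohozaev (r : R) : R :=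
  r ^ m * (r * (du r ^ 2 + 2 * Fnl om p q (u r)) + (INR m - 1) * u r * du r).

Lemma pohozaev_deriv (r : R) : 0 < r ->
  derivable_pt_lim pohozaev r (r ^ m * Sigma (S m) om p q (u r)).
Proof.
  intros Hr. unfold pohozaev. eapply derivable_pt_lim_eq.
  - apply dpl_mult; [apply derivable_pt_lim_pow |].
    apply dpl_plus; [apply dpl_mult; [apply derivable_pt_lim_id |] | apply dpl_mult].
    + apply dpl_plus; [apply dpl_square, Hd2u, Hr |].
      apply dpl_scal, (dpl_comp u (Fnl om p q)); [apply Hdu, Hr | apply Fnl_deriv, Hpos; lra].
    + apply dpl_scal, Hdu, Hr.
    + apply Hd2u, Hr.
  - rewrite Hode by exact Hr. unfold Sigma. rewrite S_INR.
    replace (INR m * r ^ pred m) with (INR m * r ^ m / r)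
      by (rewrite <- pow_pred_mult; field; lra).
    field. lra.
Qed.

Lemma pohozaev_as_energy (r : R) :
  pohozaev r = r ^ m * (2 * r * energy r + (INR m - 1) * u r * du r).
Proof. unfold pohozaev, energy. field. Qed.

Lemma pohozaev_limit_0 (eps : R) : 0 < eps -> near0 (fun s => pohozaev s <= eps).
Proof.
  intros Heps.
  assert (Hu00 : 0 < u 0) by (apply Hpos; lra).
  set (F0 := Fnl om p q (u 0)).
  assert (HF0 : 0 <= F0) by (unfold F0; apply Rle_trans with (energy 1);
                             [apply energy_nonneg | apply energy_le_initial]; lra).
  set (c := 2 * F0 + Rabs (INR m - 1) * (u 0 + 1) + 1).
  assert (Hc : 1 <= c) by (unfold c; generalize (Rabs_pos (INR m - 1)); nra).
  set (e := eps / c).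
  assert (He : 0 < e) by (apply Rdiv_lt_0_compat; lra).
  assert (Hce : c * e = eps) by (unfold e; field; lra).
  assert (Hnear : near0 (fun s => (s < 1 /\ s < e) /\ (Rabs (u s - u 0) <= 1 /\ Rabs (du s) <= e))).
  { apply near0_and; apply near0_and.
    - apply near0_lt; lra.
    - apply near0_lt, He.
    - apply u_right_continuous; lra.
    - apply du_vanishes_at_0, He. }
  apply (near0_impl _ _ Hnear). intros s Hs [[Hs1 Hse] [Hus Hdus]].
  rewrite pohozaev_as_energy.
  assert (Hsm : 0 <= s ^ m <= 1)
    by (split; [apply pow_le; lra | rewrite <- (pow1 m); apply pow_incr; lra]).
  assert (HE : 0 <= energy s <= F0)
    by (split; [apply energy_nonneg | apply energy_le_initial]; lra).
  assert (Hus' : 0 < u s <= u 0 + 1)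
    by (split; [apply Hpos; lra | pose proof (Rabs_le_bounds _ _ Hus); lra]).
  (* the bracket is at most (2 F0 + |m - 1| (u(0) + 1)) e < c e = eps *)
  assert (Hterm : (INR m - 1) * u s * du s <= Rabs (INR m - 1) * (u 0 + 1) * e).
  { apply Rle_trans with (Rabs ((INR m - 1) * u s * du s)); [apply Rle_abs |].
    rewrite !Rabs_mult, (Rabs_pos_eq (u s)) by lra.
    apply Rmult_le_compat; [| apply Rabs_pos | apply Rmult_le_compat_l; [apply Rabs_pos |] | exact Hdus];
      [apply Rmult_le_pos; [apply Rabs_pos | lra] | lra]. }
  assert (Hbracket : 2 * s * energy s + (INR m - 1) * u s * du s <= eps).
  { assert (2 * s * energy s <= 2 * s * F0) by (apply Rmult_le_compat_l; lra).
    assert (2 * s * F0 <= 2 * F0 * e)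
      by (replace (2 * s * F0) with (2 * F0 * s) by ring; apply Rmult_le_compat_l; lra).
    unfold c in Hce. lra. }
  assert (0 <= 2 * s * energy s) by nra.
  destruct (Rle_lt_dec 0 (2 * s * energy s + (INR m - 1) * u s * du s)); nra.
Qed.

Section NonpositiveSigma.
Hypothesis Hsigma : forall r, 0 < r -> Sigma (S m) om p q (u r) <= 0.

Lemma pohozaev_antitone (s r : R) : 0 < s -> s <= r -> pohozaev r <= pohozaev s.
Proof.
  apply (antitone_of_deriv pohozaev (fun x => x ^ m * Sigma (S m) om p q (u x)) 0).
  - exact pohozaev_deriv.
  - intros x Hx. assert (0 < x ^ m) by (apply pow_lt, Hx).
    pose proof (Hsigma x Hx). nra.
Qed.

Lemma pohozaev_eventually_negative :
  near_infty (fun r => Sigma (S m) om p q (u r) < 0) ->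
  exists c, c < 0 /\ near_infty (fun r => pohozaev r <= c).
Proof.
  intros [M HM].
  assert (Hnonpos : forall r, 0 < r -> pohozaev r <= 0).
  { apply antitone_le_limsup_at_0; [exact pohozaev_antitone |].
    intros eps Heps. rewrite Rplus_0_l. exact (pohozaev_limit_0 eps Heps). }
  set (R2 := Rmax M 0 + 1). set (R3 := R2 + 1).
  assert (HR2 : M < R2 /\ 0 < R2) by (unfold R2; generalize (Rmax_l M 0) (Rmax_r M 0); lra).
  assert (Hdrop : pohozaev R3 < pohozaev R2).
  { destruct (MVT_cor2 pohozaev (fun x => x ^ m * Sigma (S m) om p q (u x)) R2 R3
                       ltac:(unfold R3; lra))
      as [xi [Hxi Ixi]].
    { intros x Hx. apply pohozaev_deriv. lra. }
    assert (0 < xi ^ m) by (apply pow_lt; lra).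
    assert (Sigma (S m) om p q (u xi) < 0) by (apply HM; lra).
    assert (xi ^ m * Sigma (S m) om p q (u xi) < 0) by nra.
    unfold R3 in *. nra. }
  exists (pohozaev R3). split.
  - pose proof (Hnonpos R2 (proj2 HR2)). lra.
  - exists R3. intros r Hr. apply pohozaev_antitone; unfold R3 in *; lra.
Qed.

End NonpositiveSigma.

(* n = 1: P = 2 r E - u u' <= c < 0 forces u' > 0 for large r, so u cannot
   tend to 0. *)
Lemma no_negative_pohozaev_dim1 (c : R) : m = 0%nat -> c < 0 ->
  near_infty (fun r => pohozaev r <= c) -> False.
Proof.
  intros Hm Hc [M HM].
  set (R0 := Rmax M 0).
  assert (HR0 : M <= R0 /\ 0 <= R0) by (split; [apply Rmax_l | apply Rmax_r]).
  assert (Hinc : forall r, R0 < r -> 0 < du r).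
  { intros r Hr. specialize (HM r ltac:(lra)).
    rewrite pohozaev_as_energy, Hm in HM. simpl in HM.
    assert (0 <= r * energy r) by (apply Rmult_le_pos; [lra | apply energy_nonneg; lra]).
    assert (0 < u r) by (apply Hpos; lra).
    assert (0 < u r * du r) by lra.
    destruct (Rlt_le_dec 0 (du r)) as [Hpos_du | Hneg_du]; [exact Hpos_du | nra]. }
  assert (Hmono : forall s r, R0 < s -> s <= r -> u s <= u r).
  { intros s r Hs Hsr.
    enough (- u r <= - u s) by lra.
    apply (antitone_of_deriv (fun x => - u x) (fun x => - du x) R0); [| | lra | lra].
    - intros x Hx. apply derivable_pt_lim_opp, Hdu. lra.
    - intros x Hx. pose proof (Hinc x Hx). lra. }
  assert (Hu1 : 0 < u (R0 + 1)) by (apply Hpos; lra).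
  destruct (near_infty_exists _ (near_infty_and _ _ (u_small_at_infty _ Hu1) (near_infty_gt (R0 + 1))))
    as [t [Ht HtR]].
  pose proof (Hmono (R0 + 1) t ltac:(lra) ltac:(lra)). lra.
Qed.

(* n = 2: P = 2 r^2 E >= 0. *)
Lemma no_negative_pohozaev_dim2 (c : R) : m = 1%nat -> c < 0 ->
  near_infty (fun r => pohozaev r <= c) -> False.
Proof.
  intros Hm Hc HP.
  destruct (near_infty_exists _ (near_infty_and _ _ HP (near_infty_gt 0))) as [r [Hr Hr0]].
  rewrite pohozaev_as_energy, Hm in Hr. simpl in Hr.
  assert (0 <= r * energy r) by (apply Rmult_le_pos; [lra | apply energy_nonneg; lra]).
  nra.
Qed.

(* u' stays bounded at infinity, since u'^2 / 2 = E - F(u) <= F(u(0)) + 1. *)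
Lemma du_bounded_at_infty : exists D, near_infty (fun r => Rabs (du r) <= D).
Proof.
  exists (2 * Fnl om p q (u 0) + 3).
  destruct (Fnl_small om p q Hp Hpq Hom 1 ltac:(lra)) as [d [Hd Hsmall]].
  apply (near_infty_impl _ _ (near_infty_and _ _ (u_small_at_infty d Hd) (near_infty_gt 0))).
  intros r [Hur Hr].
  pose proof (energy_le_initial r Hr) as HE. unfold energy in HE.
  pose proof (Rabs_le_bounds _ _ (Hsmall (u r) Hur)).
  apply Rabs_le. split; nra.
Qed.

(* If u is eventually decreasing, then u' <= -k u for k = sqrt(om / 2)
   (from E >= 0 and F(u) <= -om u^2 / 4), so u decays exponentially. *)
Lemma exponential_decay : near_infty (fun r => du r < 0) ->
  exists k C, 0 < k /\ near_infty (fun r => u r <= C * exp (- k * r)).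
Proof.
  intros Hdec.
  set (k := sqrt (om / 2)).
  assert (Hk : 0 < k) by (apply sqrt_lt_R0; lra).
  assert (Hk2 : k * k = om / 2) by (apply sqrt_sqrt; lra).
  destruct (Fnl_quadratic_upper om p q Hp Hpq Hom) as [d [Hd Hquad]].
  assert (Hslope : near_infty (fun r => 0 < r /\ du r <= - k * u r)).
  { apply (near_infty_impl _ _ (near_infty_and _ _ (near_infty_and _ _ Hdec (u_small_at_infty d Hd))
                                                 (near_infty_gt 0))).
    intros r [[Hdr Hur] Hr]. split; [exact Hr |].
    pose proof (energy_nonneg r Hr) as HE. unfold energy in HE.
    pose proof (Hquad (u r) Hur).
    (* u'^2 >= (om / 2) u^2 = (k u)^2 with u' < 0 *)
    assert (Hsq : (k * u r) ^ 2 <= du r ^ 2).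
    { replace ((k * u r) ^ 2) with (k * k * u r ^ 2) by ring. rewrite Hk2. lra. }
    assert (0 < k * u r) by (apply Rmult_lt_0_compat; lra).
    nra. }
  destruct Hslope as [M HM].
  set (s0 := Rmax M 0 + 1).
  assert (Hs0 : M < s0 /\ 0 < s0) by (unfold s0; generalize (Rmax_l M 0) (Rmax_r M 0); lra).
  exists k, (u s0 * exp (k * s0)). split; [exact Hk |].
  exists s0. intros r Hr.
  assert (Hw := exp_weighted_antitone u du k M (fun x Hx => Hdu x (proj1 (HM x Hx)))
                  (fun x Hx => proj2 (HM x Hx)) s0 r ltac:(lra) ltac:(lra)).
  assert (Hinv : exp (k * r) * exp (- k * r) = 1)
    by (rewrite <- exp_plus; replace (k * r + - k * r) with 0 by ring; apply exp_0).
  assert (0 < exp (- k * r)) by apply exp_pos.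
  replace (u r) with (u r * exp (k * r) * exp (- k * r)) by (rewrite Rmult_assoc, Hinv; ring).
  apply Rmult_le_compat_r; lra.
Qed.

(* n >= 3: (m - 1) r^m (- u u') >= -c > 0 forces a polynomial lower bound on
   u |u'|, incompatible with the exponential decay of u and boundedness of u'. *)
Lemma no_negative_pohozaev_high_dim (c : R) : (2 <= m)%nat -> c < 0 ->
  near_infty (fun r => pohozaev r <= c) -> False.
Proof.
  intros Hm Hc HP.
  assert (Hm1 : 1 <= INR m - 1) by (apply le_INR in Hm; simpl in Hm; lra).
  assert (Hflux : near_infty (fun r => 0 < r /\ - c <= (INR m - 1) * r ^ m * - (u r * du r))).
  { apply (near_infty_impl _ _ (near_infty_and _ _ HP (near_infty_gt 0))).
    intros r [HPr Hr]. split; [exact Hr |].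
    rewrite pohozaev_as_energy in HPr.
    assert (0 <= r ^ m * (2 * r * energy r)).
    { apply Rmult_le_pos; [apply pow_le; lra |].
      pose proof (energy_nonneg r Hr). nra. }
    lra. }
  assert (Hdec : near_infty (fun r => du r < 0)).
  { apply (near_infty_impl _ _ Hflux). intros r [Hr Hfl].
    assert (0 < (INR m - 1) * r ^ m) by (apply Rmult_lt_0_compat; [lra | apply pow_lt, Hr]).
    assert (0 < u r) by (apply Hpos; lra).
    assert (0 < - (u r * du r)) by nra.
    nra. }
  destruct (exponential_decay Hdec) as [k [C [Hk Hdecay]]].
  destruct du_bounded_at_infty as [D HD].
  destruct (near_infty_and _ _ (near_infty_and _ _ Hflux Hdecay) HD) as [M HM].
  set (K := (INR m - 1) * C * D / - c).
  destruct (exp_dominates_pow k K M m Hk) as [r [HrM [Hr Hexp]]].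
  destruct (HM r HrM) as [[[_ Hfl] Hur] Hdur].
  assert (Hu : 0 < u r) by (apply Hpos; lra).
  assert (Hrm : 0 < r ^ m) by (apply pow_lt, Hr).
  assert (HD0 : 0 <= D) by (apply Rle_trans with (2 := Hdur), Rabs_pos).
  assert (Hinv : exp (- k * r) * exp (k * r) = 1)
    by (rewrite <- exp_plus; replace (- k * r + k * r) with 0 by ring; apply exp_0).
  (* -c <= (m - 1) r^m u |u'| <= (m - 1) r^m C e^(-k r) D *)
  assert (Hprod : - (u r * du r) <= C * exp (- k * r) * D).
  { apply Rle_trans with (u r * Rabs (du r)).
    - rewrite Ropp_mult_distr_r. apply Rmult_le_compat_l; [lra |].
      rewrite <- Rabs_Ropp. apply Rle_abs.
    - apply Rmult_le_compat; [lra | apply Rabs_pos | exact Hur | exact Hdur]. }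
  assert (Hbound : - c <= (INR m - 1) * r ^ m * (C * exp (- k * r) * D)).
  { apply Rle_trans with (1 := Hfl). apply Rmult_le_compat_l; [nra | exact Hprod]. }
  (* multiplying by e^(k r): -c e^(k r) <= (m - 1) C D r^m = -c K r^m < -c e^(k r) *)
  assert (Hlhs : - c * exp (k * r) <= (INR m - 1) * C * D * r ^ m).
  { replace ((INR m - 1) * C * D * r ^ m)
      with ((INR m - 1) * r ^ m * (C * exp (- k * r) * D) * exp (k * r))
      by (replace (C * exp (- k * r) * D) with (C * D * exp (- k * r)) by ring;
          rewrite <- (Rmult_1_r ((INR m - 1) * C * D * r ^ m)), <- Hinv; ring).
    apply Rmult_le_compat_r; [left; apply exp_pos | exact Hbound]. }
  assert (HK : (INR m - 1) * C * D * r ^ m = - c * (K * r ^ m)) by (unfold K; field; lra).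
  assert (- c * (K * r ^ m) < - c * exp (k * r)) by (apply Rmult_lt_compat_l; lra).
  lra.
Qed.

Lemma pohozaev_obstruction :
  (forall r, 0 < r -> Sigma (S m) om p q (u r) <= 0) ->
  near_infty (fun r => Sigma (S m) om p q (u r) < 0) -> False.
Proof.
  intros Hsigma Hneg.
  destruct (pohozaev_eventually_negative Hsigma Hneg) as [c [Hc HP]].
  assert (Hdim : m = 0%nat \/ m = 1%nat \/ (2 <= m)%nat) by lia.
  destruct Hdim as [Hm | [Hm | Hm]].
  - exact (no_negative_pohozaev_dim1 c Hm Hc HP).
  - exact (no_negative_pohozaev_dim2 c Hm Hc HP).
  - exact (no_negative_pohozaev_high_dim c Hm Hc HP).
Qed.

End RadialSolution.

Theorem theorem2 (n : nat) (p q om : R) (u du d2u : R -> R) (B : R) :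
  (1 <= n)%nat ->
  1 < p -> p < q ->
  0 < om -> om < omega_pq p q ->
  (* u is a positive solution on [0, oo) *)
  (forall r, 0 <= r -> 0 < u r) ->
  (forall r, 0 < r -> derivable_pt_lim u r (du r)) ->
  (forall r, 0 < r -> derivable_pt_lim du r (d2u r)) ->
  (forall r, 0 < r -> d2u r + (INR n - 1) / r * du r + fnl om p q (u r) = 0) ->
  (* u'(0) = 0, as a right derivative at 0 *)
  (forall eps, 0 < eps -> exists delta, 0 < delta /\
      forall h, 0 < h < delta -> Rabs ((u h - u 0) / h) < eps) ->
  (* lim_{r -> oo} u(r) = 0 *)
  (forall eps, 0 < eps -> exists M, forall r, M < r -> Rabs (u r) < eps) ->
  (* B: Sigma < 0 on (0,B), Sigma > 0 on (B,C) for some C in (B, oo] *)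
  0 < B ->
  (forall s, 0 < s < B -> Sigma n om p q s < 0) ->
  (exists C, B < C /\ forall s, B < s < C -> 0 < Sigma n om p q s) ->
  is_lub (fun y => exists r, 0 <= r /\ y = Rabs (u r)) (u 0) /\ B < u 0.
Proof.
  intros Hn Hp Hpq Hom _ Hpos Hdu Hd2u Hode Hu0 Hinf HB HSneg _.
  destruct n as [| m]; [lia |].
  assert (Hode' : forall r, 0 < r -> d2u r = - (INR m / r) * du r - fnl om p q (u r)).
  { intros r Hr. specialize (Hode r Hr). rewrite S_INR in Hode. lra. }
  pose proof (u_le_initial m om p q u du d2u Hp Hpq Hom Hpos Hdu Hd2u Hode' Hu0 Hinf) as Hmax.
  assert (Hu00 : 0 < u 0) by (apply Hpos; lra).
  split.
  -
    split.
    + intros y [r [Hr ->]]. rewrite Rabs_pos_eq by (left; apply Hpos, Hr). apply Hmax, Hr.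
    + intros b Hb. apply Hb. exists 0. split; [lra | rewrite Rabs_pos_eq; lra].
  - (* if u(0) <= B then Sigma(u) <= 0 everywhere, contradicting the Pohozaev identity *)
    destruct (Rlt_le_dec B (u 0)) as [HBu | HuB]; [exact HBu | exfalso].
    assert (HSB : Sigma (S m) om p q B <= 0)
      by (apply nonpos_of_neg_on_left; [exact HB | apply Sigma_continuous; assumption | exact HSneg]).
    apply (pohozaev_obstruction m om p q u du d2u Hp Hpq Hom Hpos Hdu Hd2u Hode' Hu0 Hinf).
    + intros r Hr. assert (Hur := Hmax r ltac:(lra)). assert (0 < u r) by (apply Hpos; lra).
      destruct (Req_dec (u r) B) as [-> | HuB']; [exact HSB |]. left; apply HSneg; lra.
    + apply (near_infty_impl _ _ (u_small_at_infty u Hpos Hinf B HB)).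
      intros r Hur. apply HSneg, Hur.
Qed.
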